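(* Let $A$ be a finite tree rooted at $e$, with all arcs directed from the root towards the leaves, let $R\subseteq V(A)$ be a set of destinations containing all leaves of $A$, and let $D\subseteq V(A)$. Let $u\neq e$ be a vertex of $A$ having $\ell$ children $u_1,\dots,u_\ell$, and for each $i$, $1\le i\le \ell$, let $(b_i,d_i,\mathrm{load}_i)$ be the window of the solution $\mathcal{S}(D)$ on the arc $a^{u_i}$. Then the window of $\mathcal{S}(D)$ on the arc $a^{u}$ is \[ \begin{cases} \left(1,\ 1+\sum_{i=1}^{\ell} d_i,\ \sum_{i=1}^{\ell}\mathrm{load}_i+1\right) & \text{if } u\in D,\\ \left(1+\sum_{i=1}^{\ell} b_i,\ \sum_{i=1}^{\ell} d_i,\ \sum_{i=1}^{\ell}\mathrm{load}_i+\sum_{i=1}^{\ell} b_i+1\right) & \text{if } u\notin D \text{ and } u\in R,\\ \left(\sum_{i=1}^{\ell} b_i,\ \sum_{i=1}^{\ell} d_i,\ \sum_{i=1}^{\ell}\mathrm{load}_i+\sum_{i=1}^{\ell} b_i\right) & \text{if } u\notin D \text{ and } u\notin R. \end{cases} \]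
   Context: Setting (multicast with diffusing nodes): $A$ is a multicast tree for a request $(e,R)$: a tree rooted at the source $e$, arcs directed away from $e$, whose leaves lie in the destination set $R$. A set $D\subseteq V(A)$ is a set of diffusing (branching) nodes. The solution $\mathcal{S}(D)$ is a set of directed paths in $A$ such that: every node of $R$ is the final extremity of exactly one path; every node of $D$ is the final extremity of at most one path; the origin of each path is either $e$ or a node of $D$ which is itself the final extremity of some path; a node of $D$ lies on a path only as its origin or final extremity. As in the paper, $\mathcal{S}(D)$ is taken to be the solution in which each vertex $x\neq e$ of $R\cup D$ is the final extremity of exactly one path, whose origin is the nearest proper ancestor of $x$ belonging to $D\cup\{e\}$. For a vertex $u$, $A^u$ is the subtree of $A$ rooted at $u$, and for $u\neq e$, $a^u$ is the arc joining the parent of $u$ to $u$. The path number $\mathrm{pn}(u)$ is the number of paths of $\mathcal{S}(D)$ that pass through $u$ or terminate at $u$ (equivalently, that use the arc $a^u$). The window of $\mathcal{S}(D)$ on arc $a^u$ is the triple $(\mathrm{pn}(u),\ |D\cap V(A^u)|,\ \mathrm{load})$, where $\mathrm{load}=\sum_{w\in V(A^u)}\mathrm{pn}(w)$ is the load of $\mathcal{S}(D)$ in $A^u$, i.e. the number of pairs (path, arc) with the path using the arc, over the arcs of $A^u$ together with $a^u$. *)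

From mathcomp Require Import all_boot.
Set Implicit Arguments. Unset Strict Implicit. Unset Printing Implicit Defensive.

(* A finite rooted tree on the vertex type T is given by its root e and a
   parent map: the arc a^v goes from parent v to v (for v <> e);
   parent e = e by convention and every vertex reaches e by iterating parent
   (see the hypotheses of lemma2). *)

Definition anc (T : finType) (parent : T -> T) (x y : T) : bool :=
  [exists k : 'I_#|T|.+1, iter k parent y == x].

(* children of u (the root e is excluded since parent e = e by convention) *)
Definition children (T : finType) (e : T) (parent : T -> T) (u : T) : {set T} :=
  [set v | (parent v == u) && (v != e)].

Definition subtree (T : finType) (parent : T -> T) (u : T) : {set T} :=
  [set w | anc parent u w].

Fixpoint climb (T : finType) (e : T) (parent : T -> T) (D : {set T})
    (fuel : nat) (y : T) : T :=
  match fuel with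
  | 0 => e
  | n.+1 => if (y == e) || (y \in D) then y else climb e parent D n (parent y)
  end.

(* origin of the path of S(D) ending at x : nearest proper ancestor of x in D ∪ {e} *)
Definition origin (T : finType) (e : T) (parent : T -> T) (D : {set T}) (x : T) : T :=
  climb e parent D #|T| (parent x).

(* pn(u): number of paths of S(D) (one for each x <> e in R ∪ D, from origin x
   to x) passing through u or terminating at u, i.e. containing u but not
   having u as origin. *)
Definition pn (T : finType) (e : T) (parent : T -> T) (R D : {set T}) (u : T) : nat :=
  #|[set x | [&& x \in R :|: D, x != e,
              anc parent (origin e parent D x) u, anc parent u x
              & u != origin e parent D x]]|.

Definition load (T : finType) (e : T) (parent : T -> T) (R D : {set T}) (u : T) : nat :=
  \sum_(w in subtree parent u) pn e parent R D w.

Definition window (T : finType) (e : T) (parent : T -> T) (R D : {set T}) (u : T)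
  : nat * nat * nat :=
  (pn e parent R D u, #|D :&: subtree parent u|, load e parent R D u).

From mathcomp Require Import all_boot zify.
Set Implicit Arguments. Unset Strict Implicit. Unset Printing Implicit Defensive.

(* The subtree A^u minus u is the disjoint union of the subtrees of the
   children of u, so loads and counts of diffusing nodes add up over the
   children. For the path numbers, the path ending at x below u uses a^u
   exactly when it uses the arc into the child above x, unless u is itself
   diffusing: then every such path starts at u or below it, and the only path
   using a^u is the one ending at u. *)

Section Ancestors.

Variables (T : finType) (parent : T -> T).

Lemma ancP x y : reflect (exists k, iter k parent y = x) (anc parent x y).
Proof.
apply: (iffP existsP) => [[k /eqP Hk]|[k Hk]]; first by exists k.
have Hc : fconnect parent y x by rewrite -Hk fconnect_iter.
have Hlt : findex parent y x < #|T|.+1.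
  by rewrite ltnS; apply/ltnW/(leq_trans (findex_max Hc) (max_card _)).
by exists (Ordinal Hlt); rewrite /= iter_findex.
Qed.

Lemma anc_bounded x y :
  anc parent x y -> exists2 k, k < #|T| & iter k parent y = x.
Proof.
move=> /ancP[k Hk].
have Hc : fconnect parent y x by rewrite -Hk fconnect_iter.
exists (findex parent y x); last by rewrite iter_findex.
exact: leq_trans (findex_max Hc) (max_card _).
Qed.

Lemma anc_refl x : anc parent x x.
Proof. by apply/ancP; exists 0. Qed.

Lemma anc_parent x : anc parent (parent x) x.
Proof. by apply/ancP; exists 1. Qed.

Lemma anc_trans x y z : anc parent x y -> anc parent y z -> anc parent x z.
Proof. by move=> /ancP[i <-] /ancP[j <-]; apply/ancP; exists (i + j); rewrite iterD. Qed.

Lemma anc_parent_strict x y : anc parent x y -> y != x -> anc parent x (parent y).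
Proof.
move=> /ancP[[|k] Hk] Hyx; first by rewrite -Hk eqxx in Hyx.
by apply/ancP; exists k; rewrite -iterSr.
Qed.

Lemma anc_total x y z :
  anc parent x z -> anc parent y z -> anc parent x y || anc parent y x.
Proof.
move=> /ancP[i <-] /ancP[j <-].
have [Hij|/ltnW Hji] := leqP i j.
  by apply/orP; right; apply/ancP; exists (j - i); rewrite -iterD subnK.
by apply/orP; left; apply/ancP; exists (i - j); rewrite -iterD subnK.
Qed.

End Ancestors.

Section RootedTree.

Variables (T : finType) (e : T) (parent : T -> T).
Hypothesis Hroot : parent e = e.
Hypothesis Htree : forall v : T, exists k : nat, iter k parent v = e.

Lemma iter_root n : iter n parent e = e.
Proof. by elim: n => //= n ->. Qed.

Lemma anc_root x : anc parent e x.
Proof. by have [k Hk] := Htree x; apply/ancP; exists k. Qed.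

Lemma iter_cycle_root x n : 0 < n -> iter n parent x = x -> x = e.
Proof.
move=> n_gt0 Hx; have [m Hm] := Htree x.
have Hper j : iter (j * n) parent x = x by elim: j => // j IH; rewrite mulSn iterD IH Hx.
by rewrite -(Hper m) -(subnK (leq_pmulr m n_gt0)) iterD Hm iter_root.
Qed.

Lemma parent_neq x : x != e -> parent x != x.
Proof. by apply: contra => /eqP Hx; apply/eqP/(@iter_cycle_root x 1). Qed.

Lemma anc_antisym x y : anc parent x y -> anc parent y x -> x = y.
Proof.
move=> /ancP[i Hi] /ancP[j Hj].
have [/eqP|Hpos] := posnP (j + i).
  by rewrite addn_eq0 => /andP[_ /eqP Hi0]; rewrite -Hi Hi0.
have Hy : iter (j + i) parent y = y by rewrite iterD Hi Hj.
by rewrite -Hi (iter_cycle_root Hpos Hy) iter_root.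
Qed.

Section Children.

Variable u : T.
Hypothesis Hu : u != e.

Lemma anc_child c : c \in children e parent u -> anc parent u c.
Proof. by rewrite inE => /andP[/eqP <- _]; apply: anc_parent. Qed.

Lemma child_not_anc c : c \in children e parent u -> ~~ anc parent c u.
Proof.
move=> Hc; apply/negP => Hcu.
have Hcu' := anc_antisym Hcu (anc_child Hc).
move: Hc; rewrite inE Hcu' => /andP[Hpu _].
by move: (parent_neq Hu); rewrite Hpu.
Qed.

Lemma child_above w :
  anc parent u w -> w != u -> exists2 c, c \in children e parent u & anc parent c w.
Proof.
move=> /ancP[[|k] Hk] Hwu; first by rewrite -Hk eqxx in Hwu.
exists (iter k parent w); last by apply/ancP; exists k.
rewrite inE -iterS Hk eqxx /=; apply: contra Hu => /eqP He.
by rewrite -Hk iterS He Hroot.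
Qed.

Lemma child_above_unique c1 c2 w :
  c1 \in children e parent u -> c2 \in children e parent u ->
  anc parent c1 w -> anc parent c2 w -> c1 = c2.
Proof.
have above c c' : c \in children e parent u -> c' \in children e parent u ->
    anc parent c c' -> c = c'.
  move=> Hc Hc' Hcc'; apply/eqP; apply: contraT => Hne.
  have Hpc' : parent c' = u by move: Hc'; rewrite inE => /andP[/eqP].
  have Hcu : anc parent c u by rewrite -Hpc' anc_parent_strict // eq_sym.
  by move: (child_not_anc Hc); rewrite Hcu.
move=> Hc1 Hc2 H1 H2; have /orP[H12|H21] := anc_total H1 H2.
  exact: above.
by apply: esym; apply: above.
Qed.

Lemma sum_subtree (f : T -> nat) :
  \sum_(w in subtree parent u) f w =
  f u + \sum_(c in children e parent u) \sum_(w in subtree parent c) f w.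
Proof.
rewrite (big_setD1 u) ?inE ?anc_refl //; congr (_ + _).
rewrite (exchange_big_dep [in subtree parent u :\ u]) /=; last first.
  move=> c w Hc; rewrite !inE => Hcw; rewrite (anc_trans (anc_child Hc) Hcw) andbT.
  by apply: contraNneq (child_not_anc Hc) => <-.
apply: eq_bigr => w; rewrite !inE => /andP[Hwu Huw].
have [c0 Hc0 Hc0w] := child_above Huw Hwu.
rewrite (big_pred1 c0) // => c /=; rewrite [w \in _]inE.
apply/andP/eqP => [[Hc Hcw]|->]; last by split.
exact: child_above_unique Hc Hc0 Hcw Hc0w.
Qed.

End Children.

Variable D : {set T}.

Lemma climb_anc n y : anc parent (climb e parent D n y) y.
Proof.
elim: n y => [|n IH] y /=; first exact: anc_root.
case: ifP => _; first exact: anc_refl.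
exact: anc_trans (IH _) (anc_parent _ _).
Qed.

Lemma climb_rootVD n y : (climb e parent D n y == e) || (climb e parent D n y \in D).
Proof. by elim: n y => [|n IH] y /=; [rewrite eqxx | case: ifP]. Qed.

Lemma climb_near n y k z :
  k < n -> iter k parent y = z -> (z == e) || (z \in D) ->
  anc parent z (climb e parent D n y).
Proof.
elim: n y k => [|n IH] y k //= Hk Hz HzD.
case: ifP => Hy; first by apply/ancP; exists k.
case: k Hk Hz => [|k] Hk Hz; first by rewrite /= in Hz; rewrite Hz HzD in Hy.
by apply: (IH _ k) => //; rewrite -iterSr.
Qed.

Lemma origin_rootVD x : (origin e parent D x == e) || (origin e parent D x \in D).
Proof. exact: climb_rootVD. Qed.

Lemma origin_anc x : anc parent (origin e parent D x) x.
Proof. exact: anc_trans (climb_anc _ _) (anc_parent _ _). Qed.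

Lemma origin_near x z :
  (z == e) || (z \in D) -> anc parent z (parent x) -> anc parent z (origin e parent D x).
Proof. by move=> HzD /anc_bounded[k Hk Hkz]; apply: climb_near Hk Hkz HzD. Qed.

Lemma origin_neq x : x != e -> x != origin e parent D x.
Proof.
move=> Hx; apply: contra (parent_neq Hx) => /eqP Hxo.
have Hxp : anc parent x (parent x) by rewrite {1}Hxo; apply: climb_anc.
by rewrite (anc_antisym (anc_parent _ x) Hxp).
Qed.

End RootedTree.

Lemma card_setI_sum (T : finType) (A B : {set T}) :
  #|A :&: B| = \sum_(w in B) (w \in A).
Proof.
rewrite -sum1_card big_mkcond [RHS]big_mkcond; apply: eq_bigr => w _.
by rewrite inE; case: (w \in A); case: (w \in B).
Qed.

Section Window.

Variables (T : finType) (e : T) (parent : T -> T) (R D : {set T}).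

Definition uses_arc (u x : T) : bool :=
  [&& x \in R :|: D, x != e, anc parent (origin e parent D x) u,
      anc parent u x & u != origin e parent D x].

Lemma pn_sum u : pn e parent R D u = \sum_(x in subtree parent u) uses_arc u x.
Proof.
rewrite /pn -sum1_card big_mkcond [RHS]big_mkcond; apply: eq_bigr => x _.
rewrite [x \in [set _ | _]]inE [x \in subtree _ _]inE -/(uses_arc u x).
have [Hux|Hux] := boolP (anc parent u x); first by case: uses_arc.
by rewrite /uses_arc (negPf Hux) !andbF.
Qed.

Hypothesis Hroot : parent e = e.
Hypothesis Htree : forall v : T, exists k : nat, iter k parent v = e.

Variable u : T.
Hypothesis Hu : u != e.

Lemma pn_children :
  pn e parent R D u = (u \in R :|: D) +
    \sum_(c in children e parent u) \sum_(x in subtree parent c) uses_arc u x.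
Proof.
rewrite pn_sum (sum_subtree Hroot Htree Hu); congr (_ + _).
by rewrite /uses_arc Hu (origin_anc Htree) anc_refl (origin_neq Hroot Htree D Hu) !andbT.
Qed.

Lemma subtree_child_strict c x :
  c \in children e parent u -> x \in subtree parent c -> anc parent u x && (x != u).
Proof.
move=> Hc; rewrite inE => Hcx; rewrite (anc_trans (anc_child Hc) Hcx) /=.
by apply: contraNneq (child_not_anc Hroot Htree Hu Hc) => <-.
Qed.

Lemma uses_arc_diffusing c x :
  u \in D -> c \in children e parent u -> x \in subtree parent c -> ~~ uses_arc u x.
Proof.
move=> HuD Hc Hx; apply/negP => /and5P[_ _ Hou _ /negP]; apply.
have /andP[Hux Hxu] := subtree_child_strict Hc Hx.
have Huo : anc parent u (origin e parent D x).
  by apply: origin_near; rewrite ?HuD ?orbT // anc_parent_strict.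
by rewrite (anc_antisym Hroot Htree Hou Huo).
Qed.

Lemma uses_arc_child c x :
  u \notin D -> c \in children e parent u -> x \in subtree parent c ->
  uses_arc u x = uses_arc c x.
Proof.
move=> HuD Hc Hx; have /andP[Hux _] := subtree_child_strict Hc Hx.
move: Hx; rewrite inE => Hcx; rewrite /uses_arc Hux Hcx; congr [&& _, _ & _]; rewrite /=.
have Hpc : parent c = u by move: Hc; rewrite inE => /andP[/eqP].
apply/andP/andP => [[Hou Huo]|[Hoc Hco]]; split.
- exact: anc_trans Hou (anc_child Hc).
- by apply: contraNneq (child_not_anc Hroot Htree Hu Hc) => ->.
- by rewrite -Hpc anc_parent_strict.
- apply: contraTneq (origin_rootVD e parent D x) => <-.
  by rewrite (negPf Hu) (negPf HuD).
Qed.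

Lemma pn_diffusing : u \in D -> pn e parent R D u = 1.
Proof.
move=> HuD; rewrite pn_children inE HuD orbT big1 // => c Hc.
by rewrite big1 // => x Hx; rewrite (negPf (uses_arc_diffusing HuD Hc Hx)).
Qed.

Lemma pn_not_diffusing :
  u \notin D ->
  pn e parent R D u = (u \in R) + \sum_(c in children e parent u) pn e parent R D c.
Proof.
move=> HuD; rewrite pn_children inE (negPf HuD) orbF; congr (_ + _).
apply: eq_bigr => c Hc; rewrite pn_sum.
by apply: eq_bigr => x Hx; rewrite (uses_arc_child HuD Hc Hx).
Qed.

Lemma card_diffusing_subtree :
  #|D :&: subtree parent u| =
  (u \in D) + \sum_(c in children e parent u) #|D :&: subtree parent c|.
Proof.
rewrite card_setI_sum (sum_subtree Hroot Htree Hu); congr (_ + _).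
by apply: eq_bigr => c _; rewrite card_setI_sum.
Qed.

Lemma load_subtree :
  load e parent R D u =
  pn e parent R D u + \sum_(c in children e parent u) load e parent R D c.
Proof. exact: sum_subtree. Qed.

End Window.

Theorem lemma2 (T : finType) (e : T) (parent : T -> T) (R D : {set T})
  (Hroot : parent e = e)
  (Htree : forall v : T, exists k : nat, iter k parent v = e)
  (Hleaves : forall v : T, children e parent v = set0 -> v \in R)
  (u : T) (Hu : u != e) :
  let b := fun c => (window e parent R D c).1.1 in
  let d := fun c => (window e parent R D c).1.2 in
  let ld := fun c => (window e parent R D c).2 in
  let C := children e parent u in
  window e parent R D u =
  if u \in D then
    (1, 1 + \sum_(c in C) d c, \sum_(c in C) ld c + 1)
  else if u \in R then
    (1 + \sum_(c in C) b c, \sum_(c in C) d c,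
     \sum_(c in C) ld c + \sum_(c in C) b c + 1)
  else
    (\sum_(c in C) b c, \sum_(c in C) d c,
     \sum_(c in C) ld c + \sum_(c in C) b c).
Proof.
move=> b d ld C; rewrite /b /d /ld /C /window /= {b d ld C}.
rewrite (load_subtree R D Hroot Htree Hu) (card_diffusing_subtree D Hroot Htree Hu).
case: ifPn => HuD.
  by rewrite (pn_diffusing R Hroot Htree Hu HuD); congr (_, _, _); lia.
rewrite (pn_not_diffusing R Hroot Htree Hu HuD).
by case: ifP => _; congr (_, _, _); lia.
Qed.
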